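(* Let $n\ge0$ and let $\mathfrak g$ and $\mathfrak q$ be $n$-Lie-stem Leibniz algebras with $\mathfrak g\sim_n\mathfrak q$. Then $\mathcal Z_n^{\mathsf{Lie}}(\mathfrak g)\cong\mathcal Z_n^{\mathsf{Lie}}(\mathfrak q)$.
   Context: All Leibniz algebras are over a field $\mathbb{K}$ with $\frac12\in\mathbb{K}$. A Leibniz algebra is a vector space $\mathfrak g$ with a bilinear bracket $[-,-]$ satisfying $[x,[y,z]]=[[x,y],z]-[[x,z],y]$. For $x,y\in\mathfrak g$ put $[x,y]_{lie}=[x,y]+[y,x]$. For two-sided ideals $\mathfrak m,\mathfrak n$ of $\mathfrak g$, $[\mathfrak m,\mathfrak n]_{\mathsf{Lie}}$ denotes the two-sided ideal of $\mathfrak g$ generated by $\{[m,x]_{lie}: m\in\mathfrak m, x\in\mathfrak n\}$. Lower Lie-central series: $\gamma_1^{\mathsf{Lie}}(\mathfrak g)=\mathfrak g$, $\gamma_i^{\mathsf{Lie}}(\mathfrak g)=[\gamma_{i-1}^{\mathsf{Lie}}(\mathfrak g),\mathfrak g]_{\mathsf{Lie}}$ for $i\ge2$. Upper Lie-central series: $\mathcal Z_0^{\mathsf{Lie}}(\mathfrak g)=0$, $\mathcal Z_i^{\mathsf{Lie}}(\mathfrak g)=\{x\in\mathfrak g:[x,y]_{lie}\in\mathcal Z_{i-1}^{\mathsf{Lie}}(\mathfrak g)\ \text{for all } y\in\mathfrak g\}$ for $i\ge1$. A Leibniz algebra $\mathfrak g$ is an $n$-Lie-stem Leibniz algebra if $\mathcal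 Z_n^{\mathsf{Lie}}(\mathfrak g)\subseteq\gamma_{n+1}^{\mathsf{Lie}}(\mathfrak g)$. For $n\ge0$, Leibniz algebras $\mathfrak g_1,\mathfrak g_2$ are $n$-Lie-isoclinic, written $\mathfrak g_1\sim_n\mathfrak g_2$, if there exist Leibniz algebra isomorphisms $\eta:\mathfrak g_1/\mathcal Z_n^{\mathsf{Lie}}(\mathfrak g_1)\to\mathfrak g_2/\mathcal Z_n^{\mathsf{Lie}}(\mathfrak g_2)$ and $\xi:\gamma_{n+1}^{\mathsf{Lie}}(\mathfrak g_1)\to\gamma_{n+1}^{\mathsf{Lie}}(\mathfrak g_2)$ such that $\xi([\cdots[[x_1,x_2]_{lie},x_3]_{lie},\ldots,x_{n+1}]_{lie})=[\cdots[[y_1,y_2]_{lie},y_3]_{lie},\ldots,y_{n+1}]_{lie}$ whenever $x_i\in\mathfrak g_1$, $y_i\in\mathfrak g_2$ satisfy $\eta(x_i+\mathcal Z_n^{\mathsf{Lie}}(\mathfrak g_1))=y_i+\mathcal Z_n^{\mathsf{Lie}}(\mathfrak g_2)$ for $i=1,\ldots,n+1$. *)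

From HB Require Import structures.
From mathcomp Require Import all_boot all_order all_algebra.
Set Implicit Arguments. Unset Strict Implicit. Unset Printing Implicit Defensive.
Import GRing.Theory.
Local Open Scope ring_scope.

Record leibnizAlg (K : fieldType) := LeibnizAlg {
  lcarrier :> lmodType K;
  lbr : lcarrier -> lcarrier -> lcarrier;
  lbr_linl : forall (a : K) (x y z : lcarrier),
      lbr (a *: x + y) z = a *: lbr x z + lbr y z;
  lbr_linr : forall (a : K) (x y z : lcarrier),
      lbr z (a *: x + y) = a *: lbr z x + lbr z y;
  lbr_leibniz : forall x y z : lcarrier,
      lbr x (lbr y z) = lbr (lbr x y) z - lbr (lbr x z) y }.

Section Leibniz.
Variable K : fieldType.
Variable g : leibnizAlg K.

Definition lie (x y : g) : g := lbr x y + lbr y x.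

Definition is_ideal (I : g -> Prop) : Prop :=
  [/\ I 0,
      (forall x y, I x -> I y -> I (x + y)),
      (forall (a : K) x, I x -> I (a *: x)),
      (forall x y, I x -> I (lbr x y)) &
      (forall x y, I y -> I (lbr x y))].

Definition gen_ideal (S : g -> Prop) : g -> Prop :=
  fun x => forall I, is_ideal I -> (forall s, S s -> I s) -> I x.

Definition lie_comm_ideal (M : g -> Prop) : g -> Prop :=
  gen_ideal (fun z => exists m x, M m /\ z = lie m x).

(* lower Lie-central series, indexed so that gammaLie 1 = g;
   gammaLie 0 is also set to g (unused). *)
Fixpoint gammaLie (i : nat) : g -> Prop :=
  match i with
  | 0 => fun _ => True
  | 1 => fun _ => True
  | j.+1 => lie_comm_ideal (gammaLie j)
  end.

Fixpoint ZLie (i : nat) : g -> Prop :=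
  match i with
  | 0 => fun x => x = 0
  | j.+1 => fun x => forall y, ZLie j (lie x y)
  end.

Fixpoint lcomm (xs : nat -> g) (k : nat) : g :=
  match k with
  | 0 => xs 0%N
  | j.+1 => lie (lcomm xs j) (xs j.+1)
  end.

Definition lie_stem (n : nat) : Prop :=
  forall x, ZLie n x -> gammaLie n.+1 x.

End Leibniz.

Arguments lie {K} g x y.
Arguments is_ideal {K} g I.
Arguments gen_ideal {K} g S x.
Arguments lie_comm_ideal {K} g M x.
Arguments gammaLie {K} g i x.
Arguments ZLie {K} g i x.
Arguments lcomm {K} g xs k.
Arguments lie_stem {K} g n.

Definition sub_iso (K : fieldType) (g1 g2 : leibnizAlg K)
  (A : g1 -> Prop) (B : g2 -> Prop) (f : g1 -> g2) : Prop :=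
  (forall x, A x -> B (f x)) /\
  (forall x y, A x -> A y -> f (x + y) = f x + f y) /\
  (forall (a : K) x, A x -> f (a *: x) = a *: f x) /\
  (forall x y, A x -> A y -> f (lbr x y) = lbr (f x) (f y)) /\
  (forall x y, A x -> A y -> f x = f y -> x = y) /\
  (forall y, B y -> exists2 x, A x & f x = y).

(* An isomorphism of quotient Leibniz algebras g1/N1 -> g2/N2 (N1, N2 ideals),
   represented by a lift eta : g1 -> g2 (eta(x+N1) = eta x + N2). *)
Definition quot_iso (K : fieldType) (g1 g2 : leibnizAlg K)
  (N1 : g1 -> Prop) (N2 : g2 -> Prop) (eta : g1 -> g2) : Prop :=
  (forall x y, N1 (x - y) -> N2 (eta x - eta y)) /\
  (forall x y, N2 (eta (x + y) - (eta x + eta y))) /\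
  (forall (a : K) x, N2 (eta (a *: x) - a *: eta x)) /\
  (forall x y, N2 (eta (lbr x y) - lbr (eta x) (eta y))) /\
  (forall x y, N2 (eta x - eta y) -> N1 (x - y)) /\
  (forall y, exists x, N2 (eta x - y)).

Definition lie_isoclinic (K : fieldType) (n : nat) (g1 g2 : leibnizAlg K) : Prop :=
  exists eta : g1 -> g2,
    quot_iso (ZLie g1 n) (ZLie g2 n) eta /\
  exists xi : g1 -> g2,
    sub_iso (gammaLie g1 n.+1) (gammaLie g2 n.+1) xi /\
    forall (xs : nat -> g1) (ys : nat -> g2),
      (forall i, (i <= n)%N -> ZLie g2 n (eta (xs i) - ys i)) ->
      xi (lcomm g1 xs n) = lcomm g2 ys n.

Definition sub_isomorphic (K : fieldType) (g1 g2 : leibnizAlg K)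
  (A : g1 -> Prop) (B : g2 -> Prop) : Prop :=
  exists f : g1 -> g2, sub_iso A B f.

From HB Require Import structures.
From mathcomp Require Import all_boot all_order all_algebra.
Set Implicit Arguments. Unset Strict Implicit. Unset Printing Implicit Defensive.
Import GRing.Theory.
Local Open Scope ring_scope.

(* The Leibniz identity gives [x,[a,b]_lie] = 0, so the ideal generated by
   left-normed Lie commutators of length k+1 is just their linear span, and
   gamma_(k+1) is that span.  For x in gamma_(n+1)(g), the isoclinism xi then
   satisfies xi([x,y]_lie) = [xi x, w]_lie whenever w = eta y mod Z_n(q)
   (extend the commutator by one entry and merge its first two entries).
   By induction on k, x lies in Z_k(g) iff xi x lies in Z_k(q); as both
   algebras are stem, Z_n lies inside gamma_(n+1) on both sides, so xi
   restricts to an isomorphism Z_n(g) -> Z_n(q). *)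

Section LeibnizAlgebra.
Variables (K : fieldType) (g : leibnizAlg K).
Implicit Types x y z : g.

Lemma lbrDl x y z : lbr (x + y) z = lbr x z + lbr y z.
Proof. by have := lbr_linl 1 x y z; rewrite !scale1r. Qed.

Lemma lbrDr x y z : lbr z (x + y) = lbr z x + lbr z y.
Proof. by have := lbr_linr 1 x y z; rewrite !scale1r. Qed.

Lemma lbr0l z : lbr 0 z = 0.
Proof. by apply: (addrI (lbr 0 z)); rewrite -lbrDl !addr0. Qed.

Lemma lbr0r z : lbr z 0 = 0.
Proof. by apply: (addrI (lbr z 0)); rewrite -lbrDr !addr0. Qed.

Lemma lie_linl (a : K) x y z : lie g (a *: x + y) z = a *: lie g x z + lie g y z.
Proof. by rewrite /lie lbr_linl lbr_linr scalerDr addrACA. Qed.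

Lemma lie0l z : lie g 0 z = 0.
Proof. by rewrite /lie lbr0l lbr0r addr0. Qed.

Lemma lbr_lie0 x a b : lbr x (lie g a b) = 0.
Proof. by rewrite /lie lbrDr !lbr_leibniz addrC addrA subrK subrr. Qed.

Lemma ZLie_lin k (a : K) x y : ZLie g k x -> ZLie g k y -> ZLie g k (a *: x + y).
Proof.
elim: k x y => [|k IHk] x y /=; first by move=> -> ->; rewrite scaler0 addr0.
by move=> Zx Zy z; rewrite lie_linl; apply: IHk.
Qed.

Lemma ZLie0 k : ZLie g k 0.
Proof. by elim: k => [|k IHk] //= z; rewrite lie0l. Qed.

Lemma ZLieD k x y : ZLie g k x -> ZLie g k y -> ZLie g k (x + y).
Proof. by rewrite -[x in x + y]scale1r; apply: ZLie_lin. Qed.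

Lemma gen_ideal_is_ideal S : is_ideal g (gen_ideal g S).
Proof.
split=> [I [] //|x y Sx Sy I idI|a x Sx I idI|x y Sx I idI|x y Sy I idI] sub;
  case: (idI) => _ IDl IZ Il Ir; by [apply: IDl; [apply: Sx|apply: Sy]
  | apply: IZ; apply: Sx | apply: Il; apply: Sx | apply: Ir; apply: Sy].
Qed.

Lemma ideal_lie I x y : is_ideal g I -> I x -> I (lie g x y).
Proof. by case=> _ ID _ Il Ir Ix; apply: ID; [apply: Il|apply: Ir]. Qed.

Lemma ideal_lin I (a : K) x y : is_ideal g I -> I x -> I y -> I (a *: x + y).
Proof. by case=> _ ID IZ _ _ Ix Iy; apply: ID => //; apply: IZ. Qed.

Lemma gammaLie_ideal k : is_ideal g (gammaLie g k.+2).
Proof. exact: gen_ideal_is_ideal. Qed.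

Lemma lcomm_gammaLie xs k : gammaLie g k.+1 (lcomm g xs k).
Proof.
elim: k => [|k IHk] //= I idI sub; apply: sub.
by exists (lcomm g xs k), (xs k.+1).
Qed.

Lemma eq_lcomm (xs ys : nat -> g) k :
  (forall i, (i <= k)%N -> xs i = ys i) -> lcomm g xs k = lcomm g ys k.
Proof.
elim: k => [|k IHk] exy /=; first exact: exy.
by rewrite IHk ?exy // => i ik; apply: exy; apply: leqW.
Qed.

Definition set_entry (xs : nat -> g) k y := fun i => if i == k then y else xs i.

Definition merge_head (xs : nat -> g) :=
  fun i => if i == 0%N then lie g (xs 0%N) (xs 1%N) else xs i.+1.

Lemma lcomm_merge_head xs k : lcomm g (merge_head xs) k = lcomm g xs k.+1.
Proof. by elim: k => [|k IHk] //=; rewrite IHk. Qed.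

Lemma lie_lcomm xs k y : lie g (lcomm g xs k) y = lcomm g (set_entry xs k.+1 y) k.+1.
Proof.
rewrite /= /set_entry eqxx; congr (lie g _ _); apply: eq_lcomm => i ik.
by rewrite ifN // neq_ltn ltnS ik.
Qed.

Lemma lie_lcommS xs k y :
  lie g (lcomm g xs k.+1) y = lcomm g (merge_head (set_entry xs k.+2 y)) k.+1.
Proof. by rewrite lcomm_merge_head lie_lcomm. Qed.

Inductive lcomm_span (k : nat) : g -> Prop :=
| lcomm_span_lcomm xs : lcomm_span k (lcomm g xs k)
| lcomm_span0 : lcomm_span k 0
| lcomm_span_lin (a : K) u v :
    lcomm_span k u -> lcomm_span k v -> lcomm_span k (a *: u + v).

Lemma lcomm_span_lie k u y : lcomm_span k u -> lcomm_span k.+1 (lie g u y).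
Proof.
elim=> [xs||a u' v _ Su _ Sv]; rewrite ?lie_lcomm ?lie0l ?lie_linl.
- exact: lcomm_span_lcomm.
- exact: lcomm_span0.
- exact: lcomm_span_lin.
Qed.

Lemma lcomm_span_lieS k u y : lcomm_span k.+1 u -> lcomm_span k.+1 (lie g u y).
Proof.
elim=> [xs||a u' v _ Su _ Sv]; rewrite ?lie_lcommS ?lie0l ?lie_linl.
- exact: lcomm_span_lcomm.
- exact: lcomm_span0.
- exact: lcomm_span_lin.
Qed.

Lemma lbr_lcomm_span0 k x u : lcomm_span k.+1 u -> lbr x u = 0.
Proof.
elim=> [xs||a v w _ Sv _ Sw]; rewrite ?lbr_lie0 ?lbr0r //.
by rewrite lbr_linr Sv Sw scaler0 addr0.
Qed.

Lemma lcomm_span_ideal k : is_ideal g (lcomm_span k.+1).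
Proof.
split=> [||a x Sx|x y Sx|x y Sy].
- exact: lcomm_span0.
- by move=> x y Sx Sy; rewrite -[x]scale1r; apply: lcomm_span_lin.
- by rewrite -[a *: x]addr0; apply: lcomm_span_lin => //; apply: lcomm_span0.
- (* [x,y] = [x,y]_lie because [y,x] = 0 *)
  rewrite -[lbr x y]addr0 -(lbr_lcomm_span0 y Sx).
  exact: lcomm_span_lieS.
- by rewrite (lbr_lcomm_span0 x Sy); apply: lcomm_span0.
Qed.

Lemma gammaLie_lcomm_span k x : gammaLie g k.+1 x <-> lcomm_span k x.
Proof.
split.
  elim: k x => [|k IHk] x /= Gx; first exact: (lcomm_span_lcomm 0 (fun=> x)).
  apply: Gx; first exact: lcomm_span_ideal.
  by move=> _ [m [y [Gm ->]]]; apply: lcomm_span_lie; apply: IHk.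
elim=> [xs||a u v _ Gu _ Gv]; first exact: lcomm_gammaLie.
  by case: k => [|k] //; case: (gammaLie_ideal k).
by case: k Gu Gv => [|k] // Gu Gv; apply: (ideal_lin a (gammaLie_ideal k)).
Qed.

End LeibnizAlgebra.

Lemma sub_iso0 (K : fieldType) (g q : leibnizAlg K) (A : g -> Prop) (B : q -> Prop)
    (f : g -> q) : sub_iso A B f -> A 0 -> f 0 = 0.
Proof. by case=> _ [fD _] A0; apply: (addrI (f 0)); rewrite -fD ?addr0. Qed.

Lemma sub_iso_lin (K : fieldType) (g q : leibnizAlg K) (A : g -> Prop) (B : q -> Prop)
    (f : g -> q) : is_ideal g A -> sub_iso A B f ->
  forall (a : K) x y, A x -> A y -> f (a *: x + y) = a *: f x + f y.
Proof.
move=> [_ _ AZ _ _] [_ [fD [fZ _]]] a x y Ax Ay.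
by rewrite fD ?fZ //; apply: AZ.
Qed.

Lemma sub_iso_restrict (K : fieldType) (g q : leibnizAlg K)
    (A A' : g -> Prop) (B B' : q -> Prop) (f : g -> q) :
  sub_iso A B f -> (forall x, A' x -> A x) -> (forall y, B' y -> B y) ->
  (forall x, A x -> B' (f x) <-> A' x) -> sub_iso A' B' f.
Proof.
move=> [_ [fD [fZ [fM [f_inj f_surj]]]]] AA' BB' fB'.
split; first by move=> x A'x; apply/fB'; auto.
do 4![split; first by move=> ? ? *; auto].
move=> y B'y; have [x Ax fx] := f_surj y (BB' y B'y).
by exists x => //; apply/fB'; rewrite ?fx.
Qed.

Lemma sub_isomorphic_ZLie0 (K : fieldType) (g q : leibnizAlg K) :
  sub_isomorphic (ZLie g 0) (ZLie q 0).
Proof.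
exists (fun=> 0); split=> [//|]; split=> [x y _ _|]; first by rewrite addr0.
split=> [a x _|]; first by rewrite scaler0.
split=> [x y _ _|]; first by rewrite lbr0l.
by split=> [x y /= -> ->|y /= ->] //; exists 0.
Qed.

Section Isoclinism.
Variables (K : fieldType) (g q : leibnizAlg K) (m : nat).
Variables (eta xi : g -> q).
Let n := m.+1.

Hypothesis eta_add : forall x y, ZLie q n (eta (x + y) - (eta x + eta y)).
Hypothesis eta_lbr : forall x y, ZLie q n (eta (lbr x y) - lbr (eta x) (eta y)).
Hypothesis eta_surj : forall w, exists y, ZLie q n (eta y - w).
Hypothesis xi_iso : sub_iso (gammaLie g n.+1) (gammaLie q n.+1) xi.
Hypothesis xi_lcomm : forall xs ys,
  (forall i, (i <= n)%N -> ZLie q n (eta (xs i) - ys i)) ->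
  xi (lcomm g xs n) = lcomm q ys n.

Lemma eta_lie x y : ZLie q n (eta (lie g x y) - lie q (eta x) (eta y)).
Proof.
have -> : eta (lie g x y) - lie q (eta x) (eta y) =
    (eta (lbr x y + lbr y x) - (eta (lbr x y) + eta (lbr y x))) +
    ((eta (lbr x y) - lbr (eta x) (eta y)) + (eta (lbr y x) - lbr (eta y) (eta x))).
  by rewrite [X in _ = _ + X]addrACA -opprD addrA subrK.
by apply: ZLieD; [apply: eta_add|apply: ZLieD; apply: eta_lbr].
Qed.

Lemma xi_lie x y w : gammaLie g n.+1 x -> ZLie q n (eta y - w) ->
  xi (lie g x y) = lie q (xi x) w.
Proof.
have gI : is_ideal g (gammaLie g n.+1) := gammaLie_ideal g m.
move=> /gammaLie_lcomm_span Sx yw; elim: Sx => [xs||a u v Su IHu Sv IHv].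
- have -> : xi (lcomm g xs n) = lcomm q (eta \o xs) n.
    by apply: xi_lcomm => i _; rewrite subrr; apply: ZLie0.
  rewrite !lie_lcommS; apply: xi_lcomm => -[|i] _; first exact: eta_lie.
  by rewrite /merge_head /set_entry; case: ifP => _ //; rewrite subrr; apply: ZLie0.
- by rewrite lie0l (sub_iso0 xi_iso) ?lie0l //; case: gI.
- move: Su Sv => /gammaLie_lcomm_span Gu /gammaLie_lcomm_span Gv.
  rewrite lie_linl !(sub_iso_lin gI xi_iso) ?IHu ?IHv ?lie_linl //;
    by apply: (ideal_lie y gI).
Qed.

Lemma ZLie_xi k x : gammaLie g n.+1 x -> ZLie q k (xi x) <-> ZLie g k x.
Proof.
have gI : is_ideal g (gammaLie g n.+1) := gammaLie_ideal g m.
elim: k x => [|k IHk] x Gx /=.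
  have G0 : gammaLie g n.+1 0 by case: gI.
  split=> [xi_x0|->]; last exact: sub_iso0 xi_iso G0.
  have [_ [_ [_ [_ [xi_inj _]]]]] := xi_iso.
  by apply: xi_inj; rewrite ?xi_x0 ?(sub_iso0 xi_iso G0).
split=> [Zx y|Zx w].
  have yy : ZLie q n (eta y - eta y) by rewrite subrr; apply: ZLie0.
  by apply/(IHk _ (ideal_lie y gI Gx)); rewrite (xi_lie Gx yy); apply: Zx.
have [y yw] := eta_surj w.
rewrite -(xi_lie Gx yw); apply/(IHk _ (ideal_lie y gI Gx)); exact: Zx.
Qed.

End Isoclinism.

Theorem mainTheorem18 (K : fieldType) (two_neq0 : (2%:R : K) != 0)
  (n : nat) (g q : leibnizAlg K) :
  lie_stem g n -> lie_stem q n -> lie_isoclinic n g q ->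
  sub_isomorphic (ZLie g n) (ZLie q n).
Proof.
case: n => [|m] stem_g stem_q; first by move=> _; apply: sub_isomorphic_ZLie0.
move=> [eta [[_ [eta_add [_ [eta_lbr [_ eta_surj]]]]] [xi [xi_iso xi_lcomm]]]].
exists xi; apply: (sub_iso_restrict xi_iso stem_g stem_q) => x Gx.
exact: ZLie_xi eta_add eta_lbr eta_surj xi_iso xi_lcomm _ x Gx.
Qed.
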